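(* Let $\mathfrak n=W\oplus\mathfrak z$ be a finite-dimensional 2-step nilpotent Lie algebra over a field $k$ of characteristic zero with center $\mathfrak z$ and linear complement $W$, and let $\delta$ be a Lie bialgebra cobracket on $\mathfrak n$. Then: (1) $\delta_1:W\to\Lambda^2W$ is a Lie coalgebra structure on $W$ (i.e. satisfies co-Jacobi); (2) if moreover $\delta(\mathfrak z)\subseteq\Lambda^2\mathfrak z$, then $T_iS_jT_k+T_kS_jT_i=0$ as maps $W\to W^*$, for all $1\le i,k\le\dim\mathfrak z$ and all $1\le j\le\dim W$.
   Context: A Lie bialgebra is a Lie algebra $\mathfrak g$ with a linear map $\delta:\mathfrak g\to\Lambda^2\mathfrak g$ satisfying co-Jacobi (in Sweedler notation $\delta(x)=x_1\wedge x_2$: $\delta(x_1)\wedge x_2-x_1\wedge\delta(x_2)=0$ in $\Lambda^3\mathfrak g$) and the 1-cocycle condition $\delta[x,y]=[\delta x,y]+[x,\delta y]$ (adjoint action on $\Lambda^2$). Using $\Lambda^2\mathfrak n=\Lambda^2W\oplus W\wedge\mathfrak z\oplus\Lambda^2\mathfrak z$, $\delta_1(v)$ for $v\in W$ denotes the $\Lambda^2W$-component of $\delta(v)$. Fix bases $\{z_i\}$ of $\mathfrak z$ and $\{\lambda_j\}$ of $W^*$. Define $T_i:W\to W^*$ by $[v,w]=\sum_iT_i(v)(w)z_i$ for $v,w\in W$. Let $[\,,\,]^*:W^*\times W^*\to W^*$ be the transpose of $\delta_1$: if $\delta_1(v)=v_1\wedge v_2$ then $[\lambda,\mu]^*(v)=\lambda(v_1)\mu(v_2)$.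 Define $S_j:W^*\to W\cong W^{**}$ by $[\lambda,\mu]^*=\sum_jS_j(\mu)(\lambda)\lambda_j$. *)

(* Lie algebras and Lie bialgebras are given in coordinates
   with respect to a basis indexed by a finite type I.  A vector is a function
   I -> F, a 2-tensor (element of n (x) n) is I -> I -> F, a 3-tensor is
   I -> I -> I -> F.  Lambda^k is realised inside the k-th tensor power with
   the convention  a /\ b = a (x) b - b (x) a  (full unnormalised alternation). *)
From HB Require Import structures.
From mathcomp Require Import all_boot all_order all_algebra.
Set Implicit Arguments. Unset Strict Implicit. Unset Printing Implicit Defensive.
Import Order.TTheory GRing.Theory Num.Theory.
Local Open Scope ring_scope.

Section Defs.
Variables (F : fieldType) (I : finType).

Definition ev (r : I) : I -> F := fun s => if s == r then 1 else 0.

Definition lbr (C : I -> I -> I -> F) (x y : I -> F) : I -> F :=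
  fun k => \sum_(a : I) \sum_(b : I) x a * y b * C a b k.

Definition is_lie_algebra (C : I -> I -> I -> F) : Prop :=
  (forall x k, lbr C x x k = 0) /\
  (forall x y z k, lbr C x (lbr C y z) k + lbr C y (lbr C z x) k
                   + lbr C z (lbr C x y) k = 0).

Definition cobr (D : I -> I -> I -> F) (x : I -> F) : I -> I -> F :=
  fun p q => \sum_(a : I) x a * D a p q.

(* A /\ v  and  v /\ A  for A in Lambda^2, v a vector, as 3-tensors *)
Definition wedge21 (A : I -> I -> F) (v : I -> F) : I -> I -> I -> F :=
  fun p q r => A p q * v r + A q r * v p + A r p * v q.
Definition wedge12 (v : I -> F) (A : I -> I -> F) : I -> I -> I -> F :=
  fun p q r => v p * A q r + v q * A r p + v r * A p q.

Definition skew_valued (D : I -> I -> I -> F) : Prop :=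
  forall a p q, D a p q = - D a q p.

(* co-Jacobi: delta(x_1) /\ x_2 - x_1 /\ delta(x_2) = 0 in Lambda^3, using the
   Sweedler decomposition delta(x) = sum_{b,c} (delta(x)_{bc}/2) e_b /\ e_c *)
Definition co_jacobi (D : I -> I -> I -> F) : Prop :=
  forall x p q r,
    \sum_(b : I) \sum_(c : I)
      (cobr D x b c / 2%:R) *
      (wedge21 (cobr D (ev b)) (ev c) p q r - wedge12 (ev b) (cobr D (ev c)) p q r)
    = 0.

Definition lie_coalgebra (D : I -> I -> I -> F) : Prop :=
  skew_valued D /\ co_jacobi D.

Definition adT (C : I -> I -> I -> F) (x : I -> F) (A : I -> I -> F) : I -> I -> F :=
  fun p q => \sum_(r : I) (lbr C x (ev r) p * A r q + A p r * lbr C x (ev r) q).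

Definition cocycle (C D : I -> I -> I -> F) : Prop :=
  forall x y p q,
    cobr D (lbr C x y) p q = adT C x (cobr D y) p q - adT C y (cobr D x) p q.

Definition lie_bialgebra (C D : I -> I -> I -> F) : Prop :=
  is_lie_algebra C /\ lie_coalgebra D /\ cocycle C D.

End Defs.

Section TwoStep.
Variables (F : fieldType) (m p : nat).
(* n = W (+) z with basis e_1..e_m of W (inl) and z_1..z_p of z (inr) *)
Notation idx := ('I_m + 'I_p)%type.

Definition two_step (C : idx -> idx -> idx -> F) : Prop :=
  (forall x y z k, lbr C x (lbr C y z) k = 0) /\
  (exists x y k, lbr C x y k != 0).

Definition center_is_z (C : idx -> idx -> idx -> F) : Prop :=
  forall x : idx -> F, (forall y k, lbr C x y k = 0) <-> (forall a, x (inl a) = 0).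

Definition delta_z_in_L2z (D : idx -> idx -> idx -> F) : Prop :=
  forall (i : 'I_p) (b : 'I_m) (q : idx), D (inr i) (inl b) q = 0 /\ D (inr i) q (inl b) = 0.

Definition delta1 (D : idx -> idx -> idx -> F) : 'I_m -> 'I_m -> 'I_m -> F :=
  fun a b c => D (inl a) (inl b) (inl c).

(* W and W^* in coordinates w.r.t. e_j and the dual basis lambda_j.
   T_i : W -> W^*,  [v,w] = sum_i T_i(v)(w) z_i *)
Definition Top (C : idx -> idx -> idx -> F) (i : 'I_p) (v : 'I_m -> F) : 'I_m -> F :=
  fun b => \sum_(a : 'I_m) v a * C (inl a) (inl b) (inr i).

(* S_j : W^* -> W,  [lambda,mu]^* = sum_j S_j(mu)(lambda) lambda_j, where
   [lambda,mu]^*(v) is the pairing of lambda (x) mu with delta_1(v) *)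
Definition Sop (D : idx -> idx -> idx -> F) (j : 'I_m) (mu : 'I_m -> F) : 'I_m -> F :=
  fun b => \sum_(c : 'I_m) mu c * D (inl j) (inl b) (inl c).

End TwoStep.

From HB Require Import structures.
From mathcomp Require Import all_boot all_order all_algebra.
From mathcomp Require Import ring.
Set Implicit Arguments. Unset Strict Implicit. Unset Printing Implicit Defensive.
Import GRing.Theory.
Local Open Scope ring_scope.

(* Since z is central, the cocycle identity gives x.delta(z) = delta[x,z] = 0.
   As [n,n] lies in z, the z (x) W component of x.delta(z) is (ad x (x) 1)
   applied to the W (x) W component of delta(z); so each column of the latter
   is central, hence zero.  Thus delta(z) has no Lambda^2 W part, and the
   co-Jacobi identity of delta restricts to W, which is (1).
   For (2), the pairing of T_i x (x) T_k y with delta_1 w is symmetric in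
   (y, w) by the W (x) z component of the cocycle identity (this is where
   delta(z) in Lambda^2 z enters), and changes sign under (i, x) <-> (k, y) by
   skewness of delta_1.  These transpositions generate S_3 acting on
   (x, y, w), so the pairing is antisymmetric in (i, k) alone. *)

Section Coordinates.
Variables (F : fieldType) (I : finType).

Lemma sum_ev_mul (s : I) (f : I -> F) : \sum_a ev F s a * f a = f s.
Proof.
rewrite (bigD1 s) //= /ev eqxx mul1r big1 ?addr0 // => a /negbTE ->.
by rewrite mul0r.
Qed.

Lemma lbr_ev (C : I -> I -> I -> F) (s t k : I) :
  lbr C (ev F s) (ev F t) k = C s t k.
Proof.
rewrite /lbr; under eq_bigr do under eq_bigr do rewrite -mulrA.
by under eq_bigr do rewrite -mulr_sumr; rewrite !sum_ev_mul.
Qed.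

Lemma cobr_ev (D : I -> I -> I -> F) (s p q : I) : cobr D (ev F s) p q = D s p q.
Proof. exact: sum_ev_mul. Qed.

Lemma lbr_sum_right (C : I -> I -> I -> F) x y k :
  lbr C x y k = \sum_b y b * \sum_a x a * C a b k.
Proof.
rewrite /lbr exchange_big; apply: eq_bigr => b _; rewrite mulr_sumr.
by apply: eq_bigr => a _; rewrite mulrCA mulrA.
Qed.

Lemma lbrDl (C : I -> I -> I -> F) x y z k :
  lbr C (fun s => x s + y s) z k = lbr C x z k + lbr C y z k.
Proof.
rewrite /lbr -big_split; apply: eq_bigr => a _; rewrite -big_split.
by apply: eq_bigr => b _; rewrite !mulrDl.
Qed.

Lemma lbrDr (C : I -> I -> I -> F) x y z k :
  lbr C x (fun s => y s + z s) k = lbr C x y k + lbr C x z k.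
Proof.
rewrite /lbr -big_split; apply: eq_bigr => a _; rewrite -big_split.
by apply: eq_bigr => b _; rewrite mulrDr !mulrDl.
Qed.

Variable C : I -> I -> I -> F.
Hypothesis HC : is_lie_algebra C.

Lemma lie_structN a b k : C a b k = - C b a k.
Proof.
have [alt _] := HC; have := alt (fun s => ev F a s + ev F b s) k.
rewrite lbrDl !lbrDr !lbr_ev.
have [-> ->] : C a a k = 0 /\ C b b k = 0 by rewrite -!lbr_ev !alt.
by rewrite add0r addr0 => /eqP; rewrite addr_eq0 => /eqP.
Qed.

Lemma lbrN x y k : lbr C x y k = - lbr C y x k.
Proof.
rewrite lbr_sum_right /lbr -sumrN; apply: eq_bigr => b _.
rewrite mulr_sumr -sumrN; apply: eq_bigr => a _.
by rewrite (lie_structN a b) mulrN mulrN mulrA.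
Qed.

End Coordinates.

Lemma transposition_anti (R : zmodType) (T : Type) (f g : T -> T -> T -> R) :
  (forall x y w, f x y w = - g y x w) ->
  (forall x y w, f x y w = f x w y) -> (forall x y w, g x y w = g x w y) ->
  forall x y w, f x y w = - g x y w.
Proof.
move=> fg fS gS x y w.
have gf u v t : g u v t = - f v u t by rewrite fg opprK.
by rewrite fS fg gS gf opprK fS fg.
Qed.

Section CoJacobiRestriction.
Variables (F : fieldType) (m p : nat).
Local Notation idx := ('I_m + 'I_p)%type.
Variable D : idx -> idx -> idx -> F.
Hypothesis Dz_WW0 : forall l b c, D (inr l) (inl b) (inl c) = 0.

Definition extW (x : 'I_m -> F) : idx -> F := fun s => if s is inl a then x a else 0.

Lemma cobr_extW x b c : cobr D (extW x) (inl b) (inl c) = cobr (delta1 D) x b c.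
Proof. by rewrite /cobr big_sumType /= [X in _ + X]big1 ?addr0 // => l _; rewrite mul0r. Qed.

Lemma co_jacobi_delta1 : co_jacobi D -> co_jacobi (delta1 D).
Proof.
move=> cjD x a b c; rewrite -[RHS](cjD (extW x) (inl a) (inl b) (inl c)).
rewrite big_sumType /= [X in _ = _ + X]big1 ?addr0 => [|l _]; last first.
  rewrite big1 // => s _; rewrite /wedge21 /wedge12 !cobr_ev !Dz_WW0 /ev /=.
  by rewrite ?mul0r ?mulr0 ?addr0 subrr mulr0.
apply: eq_bigr => r _.
rewrite big_sumType /= [X in _ = _ + X]big1 ?addr0 => [|l _]; last first.
  by rewrite /wedge21 /wedge12 !cobr_ev !Dz_WW0 /ev /= ?mulr0 ?mul0r ?addr0 subrr mulr0.
apply: eq_bigr => s _.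
by rewrite /wedge21 /wedge12 !cobr_ev cobr_extW.
Qed.

End CoJacobiRestriction.

Section TwoStepBialgebra.
Variables (F : fieldType) (m p : nat).
Local Notation idx := ('I_m + 'I_p)%type.
Variables C D : idx -> idx -> idx -> F.
Hypotheses (HC : is_lie_algebra C) (H2 : two_step C) (Hz : center_is_z C).

Lemma struct_zl i t k : C (inr i) t k = 0.
Proof. by rewrite -lbr_ev; apply: (proj2 (Hz (ev F (inr i)))). Qed.

Lemma struct_zr i t k : C t (inr i) k = 0.
Proof. by rewrite (lie_structN HC) struct_zl oppr0. Qed.

Lemma struct_in_z s t c : C s t (inl c) = 0.
Proof.
rewrite -lbr_ev; apply: (proj1 (Hz _)) => y k.
by rewrite (lbrN HC) (proj1 H2) oppr0.
Qed.

Lemma commuting_in_z (w : idx -> F) :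
  (forall t k, \sum_s w s * C s t k = 0) -> forall a, w (inl a) = 0.
Proof.
move=> wC; apply/(proj1 (Hz w)) => y k.
by rewrite lbr_sum_right big1 // => b _; rewrite wC mulr0.
Qed.

Lemma adT_z i A q r : adT C (ev F (inr i)) A q r = 0.
Proof. by rewrite /adT big1 // => s _; rewrite !lbr_ev !struct_zl mul0r mulr0 addr0. Qed.

Hypothesis Hco : cocycle C D.

Lemma delta_z_WW0 i b c : D (inr i) (inl b) (inl c) = 0.
Proof.
have adW a l : \sum_s C (inl a) s (inr l) * D (inr i) s (inl c) = 0.
  have := Hco (ev F (inl a)) (ev F (inr i)) (inr l) (inl c).
  rewrite adT_z subr0 {1}/cobr big1 => [E|s _]; last first.
    by rewrite lbr_ev struct_zr mul0r.
  rewrite [RHS]E; apply: eq_bigr => s _.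
  by rewrite !lbr_ev !cobr_ev struct_in_z mulr0 addr0.
apply: (@commuting_in_z (fun s => D (inr i) s (inl c))) => [[a|l] [d|l']].
- by rewrite big1 // => s _; rewrite struct_in_z mulr0.
- rewrite -[RHS]oppr0 -[in RHS](adW a l') -sumrN; apply: eq_bigr => s _.
  by rewrite (lie_structN HC s) mulrN mulrC.
- by rewrite big1 // => s _; rewrite struct_zr mulr0.
- by rewrite big1 // => s _; rewrite struct_zr mulr0.
Qed.

Hypothesis Hd : delta_z_in_L2z D.

Lemma adT_WW u w q i :
  adT C (ev F (inl u)) (cobr D (ev F (inl w))) (inl q) (inr i)
  = \sum_r D (inl w) (inl q) (inl r) * C (inl u) (inl r) (inr i).
Proof.
rewrite /adT big_sumType /= [X in _ + X]big1 ?addr0 => [|l _]; last first.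
  by rewrite !lbr_ev !cobr_ev struct_in_z struct_zr mul0r mulr0 addr0.
by apply: eq_bigr => r _; rewrite !lbr_ev !cobr_ev struct_in_z mul0r add0r.
Qed.

Lemma delta1_T_sym u w q i :
  \sum_r D (inl w) (inl q) (inl r) * C (inl u) (inl r) (inr i)
  = \sum_r D (inl u) (inl q) (inl r) * C (inl w) (inl r) (inr i).
Proof.
have := Hco (ev F (inl u)) (ev F (inl w)) (inl q) (inr i).
rewrite {1}/cobr big1 => [|[c|l] _]; last 2 first.
- by rewrite lbr_ev struct_in_z mul0r.
- by rewrite (Hd l q (inr i)).1 mulr0.
by rewrite !adT_WW => /eqP; rewrite eq_sym subr_eq0 => /eqP.
Qed.

Definition Tbracket (i k : 'I_p) (x y w : 'I_m) : F :=
  \sum_a \sum_c C (inl x) (inl a) (inr i) * C (inl y) (inl c) (inr k) * D (inl w) (inl a) (inl c).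

Lemma TbracketC i k x y w : skew_valued D -> Tbracket i k x y w = - Tbracket k i y x w.
Proof.
move=> Dskew; rewrite /Tbracket exchange_big -sumrN; apply: eq_bigr => c _.
rewrite -sumrN; apply: eq_bigr => a _.
by rewrite (Dskew (inl w) (inl a)) mulrN [C _ _ (inr i) * _]mulrC.
Qed.

Lemma Tbracket_sym i k x y w : Tbracket i k x y w = Tbracket i k x w y.
Proof.
rewrite /Tbracket; apply: eq_bigr => a _.
have E y' w' : \sum_c C (inl x) (inl a) (inr i) * C (inl y') (inl c) (inr k) * D (inl w') (inl a) (inl c)
   = C (inl x) (inl a) (inr i) * \sum_c D (inl w') (inl a) (inl c) * C (inl y') (inl c) (inr k).
  by rewrite mulr_sumr; apply: eq_bigr => c _; rewrite mulrAC -mulrA.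
by rewrite !E delta1_T_sym.
Qed.

Lemma Top_Sop_Top i k j v d :
  Top C i (Sop D j (Top C k v)) d = - \sum_e v e * Tbracket i k d e j.
Proof.
rewrite /Top /Sop /Tbracket.
under eq_bigr => a _ do rewrite big_distrl /=.
under eq_bigr => a _ do under eq_bigr => c _ do rewrite big_distrl big_distrl /=.
under eq_bigr do rewrite exchange_big.
rewrite exchange_big -sumrN; apply: eq_bigr => e _; rewrite mulr_sumr -sumrN.
apply: eq_bigr => a _; rewrite mulr_sumr -sumrN; apply: eq_bigr => c _.
rewrite (lie_structN HC (inl a)); ring.
Qed.

End TwoStepBialgebra.

Theorem mainTheorem4 (F : fieldType) (hF : [pchar F] =i pred0) (m p : nat)
    (C D : ('I_m + 'I_p)%type -> ('I_m + 'I_p)%type -> ('I_m + 'I_p)%type -> F) :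
  is_lie_algebra C -> two_step C -> center_is_z C -> lie_bialgebra C D ->
  lie_coalgebra (delta1 D) /\
  (delta_z_in_L2z D ->
     forall (i k : 'I_p) (j : 'I_m) (v : 'I_m -> F) (d : 'I_m),
       Top C i (Sop D j (Top C k v)) d + Top C k (Sop D j (Top C i v)) d = 0).
Proof.
move=> HC H2 Hz [_ [[Dskew cjD] Hco]]; split.
  split; first by move=> a b c; exact: Dskew.
  exact: co_jacobi_delta1 (delta_z_WW0 HC H2 Hz Hco) cjD.
move=> Hd i k j v d.
rewrite !Top_Sop_Top // -opprD -big_split big1 ?oppr0 // => e _ /=.
rewrite -mulrDr (@transposition_anti _ _ (Tbracket C D i k) (Tbracket C D k i)).
- by rewrite addNr mulr0.
- by move=> x y w; apply: TbracketC.
- exact: Tbracket_sym.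
- exact: Tbracket_sym.
Qed.
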